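(* Let $\mathcal{S}=(X,\xrightarrow{\Sigma},\le)$ be a very-WSTS and $I_0\in\mathrm{Idl}(X)$, and let $c,d$ be nodes of $\mathcal{T}_{I_0}$. (1) If $d$ is reachable from $c$ along arcs of $\mathcal{T}_{I_0}$ (i.e. $d$ is a descendant of $c$ or $c$ itself) and $\mathrm{ideal}(c)=\mathrm{ideal}(d)$, then $\mathrm{numaccel}(c)=\mathrm{numaccel}(d)$. (2) If $d$ is reachable from $c$ in the stuttering automaton $\mathcal{A}_{I_0}$, then $\mathrm{numaccel}(c)\le\mathrm{numaccel}(d)$.
   Context: A (labeled, ordered) transition system is $\mathcal{S}=(X,\xrightarrow{\Sigma},\le)$: $X$ a set, $\Sigma$ a finite alphabet, $\xrightarrow{a}\subseteq X\times X$, $\le$ a quasi-ordering; relations extend to words. $\mathrm{Post}(x,a)=\{y:x\xrightarrow{a}y\}$, extended to sets by union; $\downarrow D=\{x:\exists y\in D,\,x\le y\}$. WSTS: $\le$ a wqo and $x\xrightarrow{a}y$, $x'\ge x$ imply $x'\xrightarrow{w}y'\ge y$ for some $w$. Strong monotonicity: $x\xrightarrow{a}y$, $x'\ge x$ imply $x'\xrightarrow{a}y'$ with $y'\ge y$; strong-strict: additionally $x'>x$ gives $y'>y$. Deterministic: at most one $a$-successor. Ideals: nonempty downward-closed directed subsets, set $\mathrm{Idl}(X)$. Completion $\widehat{\mathcal{S}}=(\mathrm{Idl}(X),\Rightarrow_\Sigma,\subseteq)$ with $I\xRightarrow{a}J$ iff $J$ is a $\subseteq$-maximal ideal included in $\downarrow\mathrm{Post}(I,a)$;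 if deterministic, $w(I)$ is the unique $J$ with $I\xRightarrow{w}J$, when defined. $w^\infty(I)=\bigcup_kw^k(I)$ if $I\subset w(I)$, else $I$ ($w\in\Sigma^+$). Levels: $\mathrm{Idl}_0(X)=\mathrm{Idl}(X)$, $\mathrm{Idl}_n(X)$ = unions of strictly increasing sequences in $\mathrm{Idl}_{n-1}(X)$; finitely many levels if some $\mathrm{Idl}_n(X)=\emptyset$. Very-WSTS: WSTS with strong monotonicity whose completion is a deterministic WSTS ($\subseteq$ a wqo on ideals) with strong-strict monotonicity, and $\mathrm{Idl}(X)$ has finitely many levels. Ideal Karp-Miller algorithm on input $(\mathcal{S},I_0)$ (terminates for very-WSTS): builds a tree with node labels $(\mathrm{ideal}(c),\mathrm{numaccel}(c))\in\mathrm{Idl}(X)\times\mathbb{N}$ and letter-labeled arcs, starting with root $(I_0,0)$. While a node $c:(I,n)$ is unmarked: if a proper ancestor has ideal $I$, mark $c$; otherwise, if a proper ancestor $c'$ has $\mathrm{ideal}(c')\subset I$ and $\mathrm{numaccel}(c')=n$, relabel $c$ by $(w^\infty(I),n+1)$ with $w$ the arc-label word from $c'$ to $c$; then, with $(I,n)$ the current label, add for each $a\in\Sigma$ with $a(I)$ defined a child $(a(I),n)$ via an $a$-arc; mark $c$. $\mathcal{T}_{I_0}$ is the returned tree. The stuttering automaton $\mathcal{A}_{I_0}$ has the nodes of $\mathcal{T}_{I_0}$ as states, the arcs of $\mathcal{T}_{I_0}$ as transitions, plus an $\varepsilon$-transition from each leaf $c$ to any ancestor $c'$ with $\mathrm{ideal}(c')=\mathrm{ideal}(c)$.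 *)

From mathcomp Require Import all_boot.
From Stdlib Require Import Relations.
Set Implicit Arguments. Unset Strict Implicit. Unset Printing Implicit Defensive.

Section Defs.
Variables (X : Type) (Sigma : finType) (step : Sigma -> X -> X -> Prop)
          (le : X -> X -> Prop).

Fixpoint step_word (w : seq Sigma) (x y : X) : Prop :=
  match w with
  | [::] => x = y
  | a :: w' => exists z, step a x z /\ step_word w' z y
  end.

Definition lt (x y : X) := le x y /\ ~ le y x.

Definition quasi_order := (forall x, le x x) /\ (forall x y z, le x y -> le y z -> le x z).
Definition wqo := quasi_order /\
  forall f : nat -> X, exists i j, (i < j)%N /\ le (f i) (f j).

Definition is_WSTS := wqo /\
  forall a x y x', step a x y -> le x x' -> exists w y', step_word w x' y' /\ le y y'.

Definition strong_monotone :=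
  forall a x y x', step a x y -> le x x' -> exists y', step a x' y' /\ le y y'.

Definition subset (I J : X -> Prop) := forall x, I x -> J x.
Definition ssubset (I J : X -> Prop) := subset I J /\ I <> J.
Definition downclose (D : X -> Prop) : X -> Prop := fun x => exists y, D y /\ le x y.

Definition is_ideal (I : X -> Prop) :=
  (exists x, I x) /\ (forall x y, I y -> le x y -> I x) /\
  (forall x y, I x -> I y -> exists z, I z /\ le x z /\ le y z).

Definition Post (I : X -> Prop) (a : Sigma) : X -> Prop :=
  fun y => exists x, I x /\ step a x y.

Definition cstep (a : Sigma) (I J : X -> Prop) :=
  is_ideal I /\ is_ideal J /\ subset J (downclose (Post I a)) /\
  forall J', is_ideal J' -> subset J' (downclose (Post I a)) -> subset J J' -> subset J' J.

Fixpoint cword (w : seq Sigma) (I J : X -> Prop) : Prop :=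
  match w with
  | [::] => I = J
  | a :: w' => exists K, cstep a I K /\ cword w' K J
  end.

Definition c_deterministic := forall a I J J', cstep a I J -> cstep a I J' -> J = J'.

Definition c_wqo := forall f : nat -> (X -> Prop), (forall k, is_ideal (f k)) ->
  exists i j, (i < j)%N /\ subset (f i) (f j).

Definition c_monotone := forall a I J I', cstep a I J -> is_ideal I' -> subset I I' ->
  exists w J', cword w I' J' /\ subset J J'.

Definition c_strong_strict := forall a I J I', cstep a I J -> is_ideal I' -> subset I I' ->
  exists J', cstep a I' J' /\ subset J J' /\ (ssubset I I' -> ssubset J J').

Fixpoint level (n : nat) : (X -> Prop) -> Prop :=
  match n with
  | 0 => is_ideal
  | n'.+1 => fun I => exists f : nat -> (X -> Prop),
      (forall k, level n' (f k)) /\ (forall k, ssubset (f k) (f k.+1)) /\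
      (forall x, I x <-> exists k, f k x)
  end.

Definition finitely_many_levels := exists n, forall I, ~ level n I.

Definition very_WSTS :=
  is_WSTS /\ strong_monotone /\ c_deterministic /\ c_wqo /\ c_monotone /\
  c_strong_strict /\ finitely_many_levels.

(* w^infty(I) : union of the (defined) w^k(I) if I is strictly below w(I), else I *)
Definition accel (w : seq Sigma) (I : X -> Prop) : X -> Prop :=
  fun x =>
    ((exists J, cword w I J /\ ssubset I J) /\
       exists k J, cword (flatten (nseq k w)) I J /\ J x)
    \/ (~ (exists J, cword w I J /\ ssubset I J) /\ I x).

Definition label := ((X -> Prop) * nat)%type.

(* Nodes are identified with the arc-label words from the root;
   [ini w] is the label node w receives at creation, [lab w] its final label. *)
Definition IKM_tree (I0 : X -> Prop) (node : seq Sigma -> Prop)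
    (ini lab : seq Sigma -> label) : Prop :=
  node [::] /\ ini [::] = (I0, 0) /\
  (forall w a, node (rcons w a) ->
     node w /\ cstep a (lab w).1 (ini (rcons w a)).1 /\ (ini (rcons w a)).2 = (lab w).2) /\
  (forall w, node w ->
     ((exists u v, w = u ++ v /\ v <> [::] /\ (lab u).1 = (ini w).1) ->
        lab w = ini w /\ forall a, ~ node (rcons w a)) /\
     (~ (exists u v, w = u ++ v /\ v <> [::] /\ (lab u).1 = (ini w).1) ->
        ((exists u v, w = u ++ v /\ v <> [::] /\ ssubset (lab u).1 (ini w).1 /\
             (lab u).2 = (ini w).2 /\ lab w = (accel v (ini w).1, (ini w).2.+1))
         \/ (~ (exists u v, w = u ++ v /\ v <> [::] /\ ssubset (lab u).1 (ini w).1 /\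
                   (lab u).2 = (ini w).2) /\ lab w = ini w))
        /\ forall a J, cstep a (lab w).1 J -> node (rcons w a))).

Definition is_leaf (node : seq Sigma -> Prop) (w : seq Sigma) :=
  node w /\ forall a, ~ node (rcons w a).

Definition aut_step (node : seq Sigma -> Prop) (lab : seq Sigma -> label) (c d : seq Sigma) :=
  node c /\ node d /\
  ((exists a, d = rcons c a) \/
   (is_leaf node c /\ (exists v, c = d ++ v) /\ (lab d).1 = (lab c).1)).

End Defs.

From Pilot Require Import Defs.
From mathcomp Require Import all_boot.
From Stdlib Require Import Relations Classical.
From mathcomp Require boolp classical_sets.

Set Implicit Arguments. Unset Strict Implicit. Unset Printing Implicit Defensive.

(* Completion steps preserve every level Idl_n(X). An acceleration at a node c
   fires because an ancestor c' with the same numaccel satisfies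
   ideal(c') ⊂ I := w(ideal(c')); strong-strict monotonicity then gives
   I ⊂ w(I), so the increasing chain w^k(I) lifts w^∞(I) from Idl_n to
   Idl_{n+1}. Hence, along a branch, levels are never lost and every increase
   of numaccel gains one. If ideal(c) = ideal(d) for a descendant d with a
   larger numaccel, ideal(c) would lie in every level, contradicting finiteness
   of levels. For (2), arcs never decrease numaccel, and an ε-transition joins
   a leaf to an ancestor with the same ideal, hence with the same numaccel. *)

Lemma union_of_unique (T : Type) (R : (T -> Prop) -> Prop) K :
  R K -> (forall K', R K' -> K = K') -> (fun x => exists K', R K' /\ K' x) = K.
Proof.
move=> RK Runiq; apply/boolp.predeqP => x.
by split=> [[K' [/Runiq <- //]]|Kx]; exists K.
Qed.

Section MaximalIdeal.
Variables (X : Type) (le : X -> X -> Prop).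
Hypothesis le_qo : quasi_order le.

Definition lower_directed (K : X -> Prop) :=
  (forall x y, K y -> le x y -> K x) /\
  (forall x y, K x -> K y -> exists z, K z /\ le x z /\ le y z).

Lemma lower_directed_chain_union (G : (X -> Prop) -> Prop) :
  (forall K, G K -> lower_directed K) ->
  (forall K K', G K -> G K' -> Defs.subset K K' \/ Defs.subset K' K) ->
  lower_directed (fun x => exists2 K, G K & K x).
Proof.
move=> Gdir Gtot; split.
  move=> x y [K GK Ky] xy; exists K => //; exact: (proj1 (Gdir K GK)) Ky xy.
move=> x y [K GK Kx] [K' GK' K'y].
have [KK'|K'K] := Gtot K K' GK GK'.
- have [z [K'z xyz]] := proj2 (Gdir K' GK') x y (KK' x Kx) K'y.
  by exists z; split=> //; exists K'.
- have [z [Kz xyz]] := proj2 (Gdir K GK) x y Kx (K'K y K'y).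
  by exists z; split=> //; exists K.
Qed.

Lemma exists_maximal_ideal (D : X -> Prop) y : (forall x, le x y -> D x) ->
  exists K, is_ideal le K /\ Defs.subset K D /\ K y /\
    forall K', is_ideal le K' -> Defs.subset K' D -> Defs.subset K K' ->
      Defs.subset K' K.
Proof.
move=> downyD; have [le_refl le_trans] := le_qo.
(* The empty set is a candidate so that the union of the empty chain is one. *)
pose P K := Defs.subset K D /\ lower_directed K /\ (K y \/ forall x, ~ K x).
have P_chain G : classical_sets.subset G P ->
    classical_sets.total_on G classical_sets.subset -> P (classical_sets.bigcup G id).
  move=> GP Gtot; split; [|split].
  - by move=> x [K /GP [KD _] Kx]; apply: KD.
  - by apply: lower_directed_chain_union Gtot => K /GP [_ []].
  - case: (classic (exists2 K, G K & K y)) => [[K GK Ky]|noy]; first by left; exists K.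
    right=> x [K GK Kx]; have [_ [_ [Ky|K0]]] := GP K GK; last exact: K0 Kx.
    by apply: noy; exists K.
have [A [[AD [Adir Ay_or_0]] Amax]] := classical_sets.Zorn_bigcup P_chain.
have P_downy : P (le^~ y).
  split; first exact: downyD.
  split; last by left.
  by split=> [x z zy xz|x z xy zy]; [exact: le_trans xz zy|exists y].
have Ay : A y.
  case: Ay_or_0 => // A0; exfalso; apply: (Amax _ _ P_downy).
  by split=> [x /A0|yA] //; exact: A0 (yA y (le_refl y)).
exists A; split; first by split; [exists y|].
split=> //; split=> // K' K'id K'D AK'; apply: NNPP => K'A.
by apply: (Amax K'); [split|split; [|split; [case: K'id|left; exact: AK']]].
Qed.

End MaximalIdeal.

Section Completion.
Variables (X : Type) (Sigma : finType) (step : Sigma -> X -> X -> Prop)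
          (le : X -> X -> Prop).
Hypothesis le_qo : quasi_order le.
Hypothesis cdet : c_deterministic step le.
Hypothesis css : c_strong_strict step le.

Local Notation cstep := (cstep step le).
Local Notation cword := (cword step le).
Local Notation level := (level le).

Lemma cword_cat u w I J : cword (u ++ w) I J <-> exists K, cword u I K /\ cword w K J.
Proof.
elim: u I => [|a u IHu] I /=; first by split=> [|[K [-> //]]]; exists I.
split=> [[K [IK /IHu [L [KL LJ]]]]|[L [[K [IK KL]] LJ]]].
  by exists L; split=> //; exists K.
by exists K; split=> //; apply/IHu; exists L.
Qed.

Lemma cword_det w I J J' : cword w I J -> cword w I J' -> J = J'.
Proof.
elim: w I => [|a w IHw] I /=; first by move=> <- <-.
by move=> [K [IK KJ]] [K' [IK']]; rewrite (cdet IK IK') in KJ; apply: IHw.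
Qed.

Lemma cstep_ideal a I J : cstep a I J -> is_ideal le J.
Proof. by case=> _ []. Qed.

Lemma cword_strong_strict w I J I' : cword w I J -> is_ideal le I' -> Defs.subset I I' ->
  exists J', cword w I' J' /\ Defs.subset J J' /\ (ssubset I I' -> ssubset J J').
Proof.
elim: w I I' => [|a w IHw] I I' /=; first by move=> -> I'id II'; exists I'.
move=> [K [IK KJ]] I'id II'.
have [K' [I'K' [KK' strictK]]] := css IK I'id II'.
have [J' [K'J' [JJ' strictJ]]] := IHw K K' KJ (cstep_ideal I'K') KK'.
by exists J'; split; [exists K'|split=> // /strictK /strictJ].
Qed.

Lemma cstep_mono a I J I' J' : cstep a I J -> cstep a I' J' -> Defs.subset I I' ->
  Defs.subset J J' /\ (ssubset I I' -> ssubset J J').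
Proof.
move=> IJ I'J' II'; have [I'id _] := I'J'.
by have [J'' [I'J'' JJ'']] := css IJ I'id II'; rewrite (cdet I'J' I'J'').
Qed.

Lemma cstep_exists a I z y : is_ideal le I -> I z -> step a z y ->
  exists K, cstep a I K /\ K y.
Proof.
move=> Iid Iz zy.
have downyD : forall x, le x y -> downclose le (Post step I a) x.
  by move=> x xy; exists y; split=> //; exists z.
have [K [Kid [KD [Ky Kmax]]]] := exists_maximal_ideal le_qo downyD.
by exists K.
Qed.

Lemma chain_subset (f : nat -> X -> Prop) : (forall k, ssubset (f k) (f k.+1)) ->
  forall i j, i <= j -> Defs.subset (f i) (f j).
Proof.
move=> fS i j /subnK <-; elim: (j - i) => [|d IHd] x fx //.
by rewrite addSn; apply: (proj1 (fS _)); apply: IHd.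
Qed.

Lemma level_ideal n I : level n I -> is_ideal le I.
Proof.
elim: n I => [|n IHn] I In; first exact: In.
case: In => f [fn [fS fI]].
have fid k : is_ideal le (f k) := IHn _ (fn k).
have fmono := chain_subset fS.
split; [|split].
- by have [[x fx] _] := fid 0; exists x; apply/fI; exists 0.
- move=> x y /fI [k fy] xy; apply/fI; exists k; exact: (proj1 (proj2 (fid k))) fy xy.
- move=> x y /fI [i fx] /fI [j fy].
  have fx' : f (maxn i j) x by apply: (fmono i) fx; apply: leq_maxl.
  have fy' : f (maxn i j) y by apply: (fmono j) fy; apply: leq_maxr.
  have [z [fz xyz]] := proj2 (proj2 (fid (maxn i j))) x y fx' fy'.
  by exists z; split=> //; apply/fI; exists (maxn i j).
Qed.

Lemma level_pred n I : level n.+1 I -> level n I.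
Proof.
elim: n I => [|n IHn] I; first exact: (@level_ideal 1).
by case=> f [fn fS]; exists f; split=> // k; apply: IHn.
Qed.

Lemma cstep_union a (f : nat -> X -> Prop) I J x :
  (forall k, is_ideal le (f k)) -> (forall i j, i <= j -> Defs.subset (f i) (f j)) ->
  (forall z, I z <-> exists k, f k z) -> cstep a I J -> J x ->
  exists m, forall m', m <= m' -> exists K, cstep a (f m') K /\ K x.
Proof.
move=> fid fmono fI [_ [_ [JD _]]] Jx.
have [y [[z [Iz zy]] xy]] := JD x Jx; have [m fz] := proj1 (fI z) Iz.
exists m => m' mm'.
have [K [fK Ky]] := cstep_exists (fid m') (fmono _ _ mm' _ fz) zy.
by exists K; split=> //; apply: (proj1 (proj2 (cstep_ideal fK))) Ky xy.
Qed.

Lemma cstep_level n a I J : cstep a I J -> level n I -> level n J.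
Proof.
elim: n a I J => [|n IHn] a I J IJ; first by move=> _; apply: cstep_ideal IJ.
case=> f [fn [fS fI]].
have fid k : is_ideal le (f k) := level_ideal (fn k).
have fmono := chain_subset fS.
have [[x0 Jx0] _] := cstep_ideal IJ.
have [m0 succ_f] := cstep_union fid fmono fI IJ Jx0.
have [g fg] : exists g : nat -> X -> Prop, forall k, cstep a (f (k + m0)) (g k).
  exists (fun k x => exists K, cstep a (f (k + m0)) K /\ K x) => k.
  have [K [fK _]] := succ_f (k + m0) (leq_addl _ _).
  by rewrite (union_of_unique fK (fun _ => cdet fK)).
exists g; split; [|split].
- by move=> k; apply: IHn (fg k) (fn _).
- move=> k; have fS' : ssubset (f (k + m0)) (f (k.+1 + m0)) by rewrite addSn; apply: fS.
  exact: (proj2 (cstep_mono (fg k) (fg k.+1) (proj1 fS')) fS').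
- move=> x; split=> [Jx|[k gx]].
    have [m succ_x] := cstep_union fid fmono fI IJ Jx.
    have [K [fK Kx]] := succ_x (m + m0) (leq_addr _ _).
    by exists m; rewrite (cdet (fg m) fK).
  have fI' : Defs.subset (f (k + m0)) I by move=> z fz; apply/fI; exists (k + m0).
  exact: (proj1 (cstep_mono (fg k) IJ fI')).
Qed.

Lemma cword_level n w I J : cword w I J -> level n I -> level n J.
Proof.
elim: w I => [|a w IHw] I /=; first by move=> <-.
by move=> [K [IK KJ]] In; apply: IHw KJ (cstep_level IK In).
Qed.

Lemma accel_level_succ n v I : level n I ->
  (exists R, cword v I R /\ ssubset I R) -> level n.+1 (accel step le v I).
Proof.
move=> In fires.
have flatten_nseqS k : flatten (nseq k.+1 v) = flatten (nseq k v) ++ v.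
  by rewrite -addn1 nseqD flatten_cat /= cats0.
have iter k : exists Jk, cword (flatten (nseq k v)) I Jk /\ level n Jk /\
    exists Jk1, cword v Jk Jk1 /\ ssubset Jk Jk1.
  elim: k => [|k [Jk [IJk [Jkn [Jk1 [JkJk1 strict]]]]]]; first by exists I.
  have Jk1n := cword_level JkJk1 Jkn.
  exists Jk1; split; first by rewrite flatten_nseqS; apply/cword_cat; exists Jk.
  have [Jk2 [Jk1Jk2 [_ strict']]] :=
    cword_strong_strict JkJk1 (level_ideal Jk1n) (proj1 strict).
  by split=> //; exists Jk2; split=> //; apply: strict'.
have [g vg] : exists g : nat -> X -> Prop,
    forall k, cword (flatten (nseq k v)) I (g k).
  exists (fun k x => exists J, cword (flatten (nseq k v)) I J /\ J x) => k.
  have [Jk [IJk _]] := iter k.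
  by rewrite (union_of_unique IJk (fun _ => cword_det IJk)).
exists g; split; [|split].
- by move=> k; have [Jk [IJk [Jkn _]]] := iter k; rewrite (cword_det (vg k) IJk).
- move=> k; have [Jk [IJk [_ [Jk1 [JkJk1 strict]]]]] := iter k.
  have IJk1 : cword (flatten (nseq k.+1 v)) I Jk1.
    by rewrite flatten_nseqS; apply/cword_cat; exists Jk.
  by rewrite (cword_det (vg k) IJk) (cword_det (vg k.+1) IJk1).
- move=> x; split=> [[[_ [k [J [IJ Jx]]]]|[/(_ fires) []]]|[k gx]].
    by exists k; rewrite (cword_det (vg k) IJ).
  by left; split=> //; exists k, (g k).
Qed.

Lemma accel_level n v I : level n I -> level n (accel step le v I).
Proof.
move=> In; case: (classic (exists R, cword v I R /\ ssubset I R)) => [fires|idle].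
  exact: level_pred (accel_level_succ In fires).
suff -> : accel step le v I = I by [].
by apply/boolp.predeqP => x; split=> [[[]|[]]|Ix] //; right.
Qed.

Section IdealKarpMillerTree.
Variables (I0 : X -> Prop) (node : seq Sigma -> Prop) (ini lab : seq Sigma -> label X).
Hypothesis I0_ideal : is_ideal le I0.
Hypothesis tree : IKM_tree step le I0 node ini lab.

Lemma IKM_arc w a : node (rcons w a) ->
  node w /\ cstep a (lab w).1 (ini (rcons w a)).1 /\ (ini (rcons w a)).2 = (lab w).2.
Proof. by have [_ [_ [arc _]]] := tree; apply: arc. Qed.

Lemma IKM_lab_cases w : node w -> lab w = ini w \/
  exists u v, w = u ++ v /\ v <> [::] /\ ssubset (lab u).1 (ini w).1 /\
    (lab u).2 = (ini w).2 /\ lab w = (accel step le v (ini w).1, (ini w).2.+1).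
Proof.
move=> nw; have [_ [_ [_ labels]]] := tree; have [marked open] := labels w nw.
case: (classic (exists u v, w = u ++ v /\ v <> [::] /\ (lab u).1 = (ini w).1)) => rep.
  by left; case: (marked rep).
by case: (open rep) => [[[u [v accel_uv]]|[_ ->]] _]; [right; exists u, v|left].
Qed.

Lemma IKM_ini_numaccel_le w : node w -> (ini w).2 <= (lab w).2.
Proof. by case/IKM_lab_cases=> [->|[u [v [_ [_ [_ [_ ->]]]]]]]. Qed.

Lemma IKM_lab_level n w : node w -> level n (ini w).1 -> level n (lab w).1.
Proof.
case/IKM_lab_cases=> [-> //|[u [v [_ [_ [_ [_ ->]]]]]]].
exact: accel_level.
Qed.

Lemma IKM_numaccel_path c v : node (c ++ v) -> (lab c).2 <= (lab (c ++ v)).2.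
Proof.
elim/last_ind: v => [|v a IHv]; first by rewrite cats0.
rewrite -rcons_cat => /[dup] nw /IKM_arc [ncv [_ ini2]].
by apply: leq_trans (IHv ncv) _; rewrite -ini2; apply: IKM_ini_numaccel_le.
Qed.

Lemma IKM_level_path n c v : node (c ++ v) -> level n (lab c).1 -> level n (lab (c ++ v)).1.
Proof.
elim/last_ind: v => [|v a IHv]; first by rewrite cats0.
rewrite -rcons_cat => /[dup] nw /IKM_arc [ncv [arc _]] cn.
by apply: IKM_lab_level nw _; apply: cstep_level arc (IHv ncv cn).
Qed.

Lemma IKM_lab_ideal w : node w -> is_ideal le (lab w).1.
Proof.
have [nroot [iniroot _]] := tree.
have rootn : level 0 (lab [::]).1 by apply: IKM_lab_level; rewrite // iniroot.
by move=> nw; apply: (IKM_level_path (c := [::]) nw rootn).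
Qed.

Lemma IKM_cword_path u v : node (u ++ v) -> (lab u).2 = (lab (u ++ v)).2 ->
  cword v (lab u).1 (lab (u ++ v)).1.
Proof.
elim/last_ind: v => [|v a IHv]; first by rewrite cats0.
rewrite -rcons_cat => nw eq2; have [nuv [arc ini2]] := IKM_arc nw.
have lab2 : (lab (u ++ v)).2 = (lab u).2.
  apply/eqP; rewrite eqn_leq IKM_numaccel_path // andbT eq2 -ini2.
  exact: IKM_ini_numaccel_le.
have unaccel : lab (rcons (u ++ v) a) = ini (rcons (u ++ v) a).
  case: (IKM_lab_cases nw) => // [[u' [v' [_ [_ [_ [_ lab_accel]]]]]]].
  by move: eq2; rewrite lab_accel /= ini2 lab2 => /n_Sn.
rewrite -cats1; apply/cword_cat; exists (lab (u ++ v)).1.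
by split; [apply: IHv; rewrite ?lab2|exists (ini (rcons (u ++ v) a)).1; rewrite unaccel].
Qed.

Lemma IKM_cword_ini u v : v <> [::] -> node (u ++ v) -> (lab u).2 = (ini (u ++ v)).2 ->
  cword v (lab u).1 (ini (u ++ v)).1.
Proof.
case/lastP: v => [//|v b] _; rewrite -rcons_cat => nw eq2.
have [nuv [arc ini2]] := IKM_arc nw.
rewrite -cats1; apply/cword_cat; exists (lab (u ++ v)).1; split.
  by apply: IKM_cword_path; rewrite // -ini2.
by exists (ini (rcons (u ++ v) b)).1.
Qed.

Lemma IKM_accel_level_succ n w : node w -> (ini w).2 < (lab w).2 ->
  level n (ini w).1 -> level n.+1 (lab w).1.
Proof.
move=> nw; case: (IKM_lab_cases nw) => [-> |[u [v [wuv [v0 [strict [eq2 ->]]]]]]].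
  by rewrite ltnn.
move=> _ inin; subst w.
have [R [iniR [_ strictR]]] :=
  cword_strong_strict (IKM_cword_ini v0 nw eq2) (level_ideal inin) (proj1 strict).
by apply: accel_level_succ inin _; exists R; split=> //; apply: strictR.
Qed.

Lemma IKM_level_succ_path n c v : node (c ++ v) -> (lab c).2 < (lab (c ++ v)).2 ->
  level n (lab c).1 -> level n.+1 (lab (c ++ v)).1.
Proof.
elim/last_ind: v => [|v a IHv]; first by rewrite cats0 ltnn.
rewrite -rcons_cat => nw lt2 cn; have [ncv [arc ini2]] := IKM_arc nw.
case: (ltnP (lab c).2 (lab (c ++ v)).2) => [lt2'|ge2].
  by apply: IKM_lab_level nw _; apply: cstep_level arc (IHv ncv lt2' cn).
apply: IKM_accel_level_succ nw _ _; first by rewrite ini2; apply: leq_ltn_trans ge2 lt2.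
by apply: cstep_level arc _; apply: IKM_level_path ncv cn.
Qed.

Hypothesis fin_levels : finitely_many_levels le.

Lemma IKM_numaccel_eq c v : node c -> node (c ++ v) -> (lab c).1 = (lab (c ++ v)).1 ->
  (lab c).2 = (lab (c ++ v)).2.
Proof.
move=> nc ncv eq1; apply/eqP; rewrite eqn_leq IKM_numaccel_path //= leqNgt.
apply/negP => lt2; have [N notN] := fin_levels; apply: (notN (lab c).1).
elim: N {notN} => [|n IHn]; first exact: IKM_lab_ideal.
by rewrite eq1; apply: IKM_level_succ_path.
Qed.

Lemma aut_step_numaccel_le c d : aut_step node lab c d -> (lab c).2 <= (lab d).2.
Proof.
case=> nc [nd [[a dca]|[_ [[v cdv] eq1]]]]; subst.
  by rewrite -cats1; apply: IKM_numaccel_path; rewrite cats1.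
by rewrite (IKM_numaccel_eq nd nc eq1).
Qed.

End IdealKarpMillerTree.

End Completion.

Unset Implicit Arguments.

Theorem proposition25 (X : Type) (Sigma : finType) (step : Sigma -> X -> X -> Prop)
    (le : X -> X -> Prop) (I0 : X -> Prop) (node : seq Sigma -> Prop)
    (ini lab : seq Sigma -> label X) :
  very_WSTS step le -> is_ideal le I0 -> IKM_tree step le I0 node ini lab ->
  (forall c v, node c -> node (c ++ v) -> (lab c).1 = (lab (c ++ v)).1 ->
      (lab c).2 = (lab (c ++ v)).2) /\
  (forall c d, node c -> clos_refl_trans _ (aut_step node lab) c d ->
      ((lab c).2 <= (lab d).2)%N).
Proof.
move=> [[[le_qo _] _] [_ [cdet [_ [_ [css fin_levels]]]]]] I0_ideal tree.
have numaccel_eq := IKM_numaccel_eq le_qo cdet css I0_ideal tree fin_levels.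
split=> [c v|c d _]; first exact: numaccel_eq.
elim=> [x y xy|x|x y z _ xy _ yz].
- exact: (aut_step_numaccel_le le_qo cdet css I0_ideal tree fin_levels xy).
- exact: leqnn.
- exact: leq_trans xy yz.
Qed.
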